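(* Let $S$ be an AG-groupoid with a left identity. If $B$ is a bi-ideal of $S$ with $B^{2}=B$, then $B$ is a (two-sided) ideal of $S$, i.e. $SB\subseteq B$ and $BS\subseteq B$.
   Context: An AG-groupoid is a set $S$ with a binary operation satisfying $(ab)c=(cb)a$ for all $a,b,c\in S$. A left identity is an element $e$ with $ea=a$ for all $a\in S$. For nonempty subsets, $AB=\{ab:a\in A,b\in B\}$, $B^{2}=BB$. A bi-ideal of $S$ is a nonempty subset $B$ with $BB\subseteq B$ and $(BS)B\subseteq B$. *)

Set Implicit Arguments.

Definition left_invertive (S : Type) (op : S -> S -> S) : Prop :=
  forall a b c : S, op (op a b) c = op (op c b) a.

Definition left_identity (S : Type) (op : S -> S -> S) (e : S) : Prop :=
  forall a : S, op e a = a.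

Definition setmul (S : Type) (op : S -> S -> S) (A B : S -> Prop) : S -> Prop :=
  fun x => exists a b, A a /\ B b /\ x = op a b.

Definition subset (S : Type) (A B : S -> Prop) : Prop := forall x, A x -> B x.

Definition set_eq (S : Type) (A B : S -> Prop) : Prop := subset A B /\ subset B A.

Definition setT (S : Type) : S -> Prop := fun _ => True.

Definition bi_ideal (S : Type) (op : S -> S -> S) (B : S -> Prop) : Prop :=
  (exists b, B b) /\
  subset (setmul op B B) B /\
  subset (setmul op (setmul op B (@setT S)) B) B.


Set Implicit Arguments.

(* Two identities of AG-groupoids drive the argument: the medial law
   (ab)(cd) = (ac)(bd), valid in every AG-groupoid, and, in presence of a
   left identity e, the law a(bc) = b(ac) (the medial law (ea)(bc) = (eb)(ac)).

   Left ideal: write b = b1 b2 and b1 = c1 c2 using B = BB.  Then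
     s b = s (b1 b2) = b1 (s b2) = (c1 c2)(s b2) = (c1 s)(c2 b2),
   which lies in (BS)B because c2 b2 is in BB, a subset of B.
   Right ideal: with b = b1 b2, left invertivity gives
     b s = (b1 b2) s = (s b2) b1,
   and s b2 is in B by the left ideal property, so b s lies in BB. *)

Section AGGroupoid.

Variables (S : Type) (op : S -> S -> S).
Hypothesis hAG : left_invertive op.

Lemma medial (a b c d : S) :
  op (op a b) (op c d) = op (op a c) (op b d).
Proof.
  rewrite hAG, (hAG c d b), hAG. reflexivity.
Qed.

Section LeftIdentity.

Variable e : S.
Hypothesis he : left_identity op e.

Lemma left_exchange (a b c : S) : op a (op b c) = op b (op a c).
Proof.
  pose proof (medial e a b c) as M. rewrite !he in M. exact M.
Qed.

Section IdempotentBiIdeal.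

(* B is a bi-ideal with B ⊆ BB (the inclusion BB ⊆ B is part of being a
   bi-ideal). *)
Variable B : S -> Prop.
Hypothesis hBB : subset (setmul op B B) B.
Hypothesis hBSB : subset (setmul op (setmul op B (@setT S)) B) B.
Hypothesis hB_split : subset B (setmul op B B).

Lemma idempotent_bi_ideal_left (s b : S) : B b -> B (op s b).
Proof.
  intros Hb.
  destruct (hB_split Hb) as [b1 [b2 [Hb1 [Hb2 ->]]]].
  destruct (hB_split Hb1) as [c1 [c2 [Hc1 [Hc2 ->]]]].
  rewrite left_exchange, medial.
  apply hBSB. exists (op c1 s), (op c2 b2). split; [| split].
  - exists c1, s. repeat split; assumption.
  - apply hBB. exists c2, b2. repeat split; assumption.
  - reflexivity.
Qed.

Lemma idempotent_bi_ideal_right (b s : S) : B b -> B (op b s).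
Proof.
  intros Hb.
  destruct (hB_split Hb) as [b1 [b2 [Hb1 [Hb2 ->]]]].
  rewrite hAG. apply hBB.
  exists (op s b2), b1. split; [| split].
  - apply idempotent_bi_ideal_left. assumption.
  - assumption.
  - reflexivity.
Qed.

End IdempotentBiIdeal.
End LeftIdentity.
End AGGroupoid.

Theorem lemma1 (S : Type) (op : S -> S -> S) (e : S)
  (hAG : left_invertive op) (he : left_identity op e)
  (B : S -> Prop) (hB : bi_ideal op B)
  (hB2 : set_eq (setmul op B B) B) :
  subset (setmul op (@setT S) B) B /\ subset (setmul op B (@setT S)) B.
Proof.
  destruct hB as [_ [HBB HBSB]].
  destruct hB2 as [_ Hsplit].
  split.
  - intros x [s [b [_ [Hb ->]]]].
    exact (idempotent_bi_ideal_left hAG he HBB HBSB Hsplit s b Hb).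
  - intros x [b [s [Hb [_ ->]]]].
    exact (idempotent_bi_ideal_right hAG he HBB HBSB Hsplit b s Hb).
Qed.
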